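(* Let $s_1,\dots,s_n\in\{0,1\}^{<\mathbb N}$ with $s_i\notin\{1^m:m\ge0\}$ for each $i$, and let $t_1,\dots,t_n\in\mathbb Z$ with $\sum_{i=1}^n t_i=0$. Then $y_{s_1}^{t_1}\cdots y_{s_n}^{t_n}\in S$.
   Context: Let $\{0,1\}^{\mathbb N}$ be the Cantor set of infinite binary sequences and $\{0,1\}^{<\mathbb N}$ the set of finite binary words, including the empty word (note $1^0$ is the empty word); juxtaposition denotes concatenation, $0^n,1^n$ denote constant words. Homeomorphisms act on the right. Define $x,y$ by $00\eta\cdot x=0\eta$, $01\eta\cdot x=10\eta$, $1\eta\cdot x=11\eta$, and recursively $00\eta\cdot y=0(\eta\cdot y)$, $01\eta\cdot y=10(\eta\cdot y^{-1})$, $1\eta\cdot y=11(\eta\cdot y)$; $x_s$ (resp. $y_s$) sends $s\eta\mapsto s(\eta\cdot x)$ (resp. $s(\eta\cdot y)$) and fixes sequences not beginning with $s$. For $n\ge0$, $p_n$ is the homeomorphism with $1^k0\eta\cdot p_n=1^{k+1}0\eta$ for $0\le k\le n-1$, $1^n0\eta\cdot p_n=1^{n+1}\eta$, and $1^{n+1}\eta\cdot p_n=0\eta$. $T$ is the group generated by all $x_s$ and all $p_n$, and $S=\langle T,\ y_{10}y_{110}^{-1}\rangle$. *)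

(* Cantor set {0,1}^N modelled as streams nat -> bool
   (false = 0, true = 1); finite words are seq bool. Homeomorphisms act on
   the RIGHT: a product g1 g2 ... gn acts as eta |-> (...((eta.g1).g2)...).gn,
   i.e. as the function gn \o ... \o g1. *)
From mathcomp Require Import all_boot all_order all_algebra.
Set Implicit Arguments. Unset Strict Implicit. Unset Printing Implicit Defensive.

Definition stream := nat -> bool.

Definition shift (k : nat) (e : stream) : stream := fun n => e (k + n).
Definition prepend (w : seq bool) (e : stream) : stream :=
  fun n => if n < size w then nth false w n else e (n - size w).
Definition begins (w : seq bool) (e : stream) : bool :=
  all (fun i => e i == nth false w i) (iota 0 (size w)).

Definition xfun (e : stream) : stream :=
  if e 0 then prepend [:: true] e
  else if e 1 then prepend [:: true; false] (shift 2 e)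
  else shift 1 e.

(* y (inv = false) and y^{-1} (inv = true), computed bit by bit.
   y :      00eta -> 0(eta.y),    01eta -> 10(eta.y^-1),  1eta  -> 11(eta.y)
   y^-1 :    0eta -> 00(eta.y^-1), 10eta -> 01(eta.y),    11eta -> 1(eta.y^-1)
   (the second line is the inverse of the first, forced by the recursion).
   [ybit fuel inv e n] is the n-th output bit; fuel n.+1 always suffices since
   each step emits at least one output letter. *)
Fixpoint ybit (fuel : nat) (inv : bool) (e : stream) (n : nat) : bool :=
  match fuel with
  | O => false
  | S f =>
    if ~~ inv then
      if e 0 then
        match n with 0 | 1 => true | S (S m) => ybit f false (shift 1 e) m end
      else if e 1 then
        match n with 0 => true | 1 => false | S (S m) => ybit f true (shift 2 e) m end
      else
        match n with 0 => false | S m => ybit f false (shift 2 e) m end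
    else
      if ~~ e 0 then
        match n with 0 | 1 => false | S (S m) => ybit f true (shift 1 e) m end
      else if ~~ e 1 then
        match n with 0 => false | 1 => true | S (S m) => ybit f false (shift 2 e) m end
      else
        match n with 0 => true | S m => ybit f true (shift 2 e) m end
  end.

Definition yfun (inv : bool) (e : stream) : stream := fun n => ybit n.+1 inv e n.

Definition restr (s : seq bool) (g : stream -> stream) (e : stream) : stream :=
  if begins s e then prepend s (g (shift (size s) e)) else e.

Definition x_ (s : seq bool) := restr s xfun.
Definition y_ (s : seq bool) := restr s (yfun false).
Definition yinv_ (s : seq bool) := restr s (yfun true).

(* p_n : 1^k 0 eta -> 1^(k+1) 0 eta (k < n), 1^n 0 eta -> 1^(n+1) eta,
         1^(n+1) eta -> 0 eta *)
Definition pfun (n : nat) (e : stream) : stream :=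
  if begins (nseq n.+1 true) e then prepend [:: false] (shift n.+1 e)
  else if begins (rcons (nseq n true) false) e
       then prepend (nseq n.+1 true) (shift n.+1 e)
  else prepend [:: true] e.

Definition rmul (g h : stream -> stream) : stream -> stream := fun e => h (g e).

Inductive gen_grp (G : (stream -> stream) -> Prop) : (stream -> stream) -> Prop :=
  | gg_gen g : G g -> gen_grp G g
  | gg_one : gen_grp G (fun e => e)
  | gg_mul f g : gen_grp G f -> gen_grp G g -> gen_grp G (rmul f g)
  | gg_inv f g : gen_grp G f -> (forall e, g (f e) = e) -> (forall e, f (g e) = e) ->
                 gen_grp G g.

Definition Tgens (g : stream -> stream) : Prop :=
  (exists s, g = x_ s) \/ (exists n, g = pfun n).
Definition T := gen_grp Tgens.
Definition S := gen_grp (fun g => T g \/ g = rmul (y_ [:: true; false])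
                                                 (yinv_ [:: true; true; false])).

Definition ypow (s : seq bool) (t : int) : stream -> stream :=
  match t with
  | Posz k => fun e => iter k (y_ s) e
  | Negz k => fun e => iter k.+1 (yinv_ s) e
  end.

Definition rprod (l : seq (stream -> stream)) : stream -> stream :=
  foldl rmul (fun e => e) l.

(* Call two words a, b congruent (ycong a b) when y_a y_b^-1 lies in S, i.e.
   when y_a and y_b lie in the same right coset of S.  This is an equivalence
   relation, and it is transported by conjugation: if g (with g^-1) lies in S
   and g replaces the prefix a by a' and b by b', then ycong a b implies
   ycong a' b'.  Starting from the generator ycong 10 110 and conjugating by
   x and p_2, every word 1^k 0 w is congruent to every word 1^(M+1) 0.
   Fix r = 1^(R+1) 0 with R larger than every |s_i|.  The cylinders of r and
   s_i are disjoint, so y_r commutes with y_{s_i} and y_{s_i}^t y_r^-t =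
   (y_{s_i} y_r^-1)^t lies in S.  Telescoping, the product of the
   y_{s_i}^{t_i}, followed by y_r^-(t_1 + ... + t_n) = 1, lies in S. *)
From mathcomp Require Import all_boot all_order all_algebra.
From mathcomp Require Import zify.
From Stdlib Require Import FunctionalExtensionality.
Set Implicit Arguments. Unset Strict Implicit. Unset Printing Implicit Defensive.

Definition scons (b : bool) (e : stream) : stream :=
  fun n => if n is m.+1 then e m else b.

Lemma prepend_nil e : prepend [::] e = e.
Proof. by apply: functional_extensionality => n; rewrite /prepend /= subn0. Qed.

Lemma prepend_cons b w e : prepend (b :: w) e = scons b (prepend w e).
Proof. by apply: functional_extensionality => -[|n]. Qed.

Lemma shift0 e : shift 0 e = e.
Proof. by apply: functional_extensionality. Qed.

Lemma shift_scons k b e : shift k.+1 (scons b e) = shift k e.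
Proof. by apply: functional_extensionality. Qed.

Lemma scons_eta2 e : e = scons (e 0) (scons (e 1) (shift 2 e)).
Proof. by apply: functional_extensionality => -[|[|n]]. Qed.

Lemma scons_eta3 e : e = scons (e 0) (scons (e 1) (scons (e 2) (shift 3 e))).
Proof. by apply: functional_extensionality => -[|[|[|n]]]. Qed.

Lemma beginsP w e :
  reflect (forall i, i < size w -> e i = nth false w i) (begins w e).
Proof.
apply: (iffP allP) => H i; first by move=> Hi; apply/eqP; apply: H; rewrite mem_iota.
by rewrite mem_iota add0n => /andP[_ Hi]; apply/eqP; apply: H.
Qed.

Lemma begins_prepend w e : begins w (prepend w e).
Proof. by apply/beginsP => i Hi; rewrite /prepend Hi. Qed.

Lemma shift_prepend w e : shift (size w) (prepend w e) = e.
Proof.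
apply: functional_extensionality => n.
by rewrite /shift /prepend ltnNge leq_addr /= addKn.
Qed.

Lemma begins_eq w e : begins w e -> e = prepend w (shift (size w) e).
Proof.
move/beginsP => H; apply: functional_extensionality => n.
rewrite /prepend /shift; case: ifP => Hn; first exact: H.
by rewrite subnKC // leqNgt Hn.
Qed.

(* Neither word is a prefix of the other: their cylinders are disjoint. *)
Definition incomparable (a b : seq bool) : Prop :=
  exists i, [/\ i < size a, i < size b & nth false a i <> nth false b i].

Lemma incomparable_sym a b : incomparable a b -> incomparable b a.
Proof. by case=> i [h1 h2 h3]; exists i; split => // /esym. Qed.

Lemma begins_incomparable a b e :
  incomparable a b -> begins b e -> begins a e = false.
Proof.
case=> i [h1 h2 h3] /beginsP Hb; apply/negP => /beginsP Ha.
by apply: h3; rewrite -Ha // -Hb.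
Qed.

Lemma restr_comm a b F G e : incomparable a b ->
  restr a F (restr b G e) = restr b G (restr a F e).
Proof.
move=> ab; rewrite /restr.
case Hb: (begins b e); case Ha: (begins a e).
- by rewrite (begins_incomparable ab Hb) in Ha.
- by rewrite (begins_incomparable ab (begins_prepend _ _)) Hb.
- by rewrite (begins_incomparable (incomparable_sym ab) (begins_prepend _ _)).
- by rewrite Hb.
Qed.

Lemma restr_cancel s F G : cancel G F -> cancel (restr s G) (restr s F).
Proof.
move=> GF e; rewrite /restr; case Hb: (begins s e); last by rewrite Hb.
by rewrite begins_prepend shift_prepend GF -begins_eq.
Qed.

Lemma restr_conj a a' F g h : cancel h g -> cancel g h ->
  (forall x, g (prepend a x) = prepend a' x) ->
  forall e, g (restr a F (h e)) = restr a' F e.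
Proof.
move=> hg gh ga e; rewrite /restr.
case Hb: (begins a' e).
  have -> : h e = prepend a (shift (size a') e).
    by rewrite {1}(begins_eq Hb) -ga gh.
  by rewrite begins_prepend shift_prepend ga.
case Ha: (begins a (h e)); last by rewrite hg.
have He : e = prepend a' (shift (size a) (h e)) by rewrite -ga -(begins_eq Ha) hg.
by rewrite He begins_prepend in Hb.
Qed.

Lemma ybit_fuel f g inv e n : n < f -> n < g -> ybit f inv e n = ybit g inv e n.
Proof.
elim: f g inv e n => [|f IH] [|g] inv e n //= Hf Hg.
case: inv; case: (e 0); case: (e 1) => /=;
  case: n Hf Hg => [|[|n]] Hf Hg //=; apply: IH; lia.
Qed.

Lemma ybit_succ f inv e n : ybit f.+1 inv e n =
  if ~~ inv then
    if e 0 then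
      match n with 0 | 1 => true | m.+2 => ybit f false (shift 1 e) m end
    else if e 1 then
      match n with 0 => true | 1 => false | m.+2 => ybit f true (shift 2 e) m end
    else
      match n with 0 => false | m.+1 => ybit f false (shift 2 e) m end
  else
    if ~~ e 0 then
      match n with 0 | 1 => false | m.+2 => ybit f true (shift 1 e) m end
    else if ~~ e 1 then
      match n with 0 => false | 1 => true | m.+2 => ybit f false (shift 2 e) m end
    else
      match n with 0 => true | m.+1 => ybit f true (shift 2 e) m end.
Proof. by []. Qed.

Lemma yfun_unfold e : yfun false e =
  if e 0 then scons true (scons true (yfun false (shift 1 e)))
  else if e 1 then scons true (scons false (yfun true (shift 2 e)))
  else scons false (yfun false (shift 2 e)).
Proof.
apply: functional_extensionality => n; rewrite /yfun ybit_succ.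
case: (e 0); case: (e 1); rewrite /scons /yfun; cbv beta iota;
  case: n => [|[|n]] //; cbv beta iota; apply: ybit_fuel; lia.
Qed.

Lemma yinv_unfold e : yfun true e =
  if ~~ e 0 then scons false (scons false (yfun true (shift 1 e)))
  else if ~~ e 1 then scons false (scons true (yfun false (shift 2 e)))
  else scons true (yfun true (shift 2 e)).
Proof.
apply: functional_extensionality => n; rewrite /yfun ybit_succ.
case: (e 0); case: (e 1); rewrite /scons /yfun; cbv beta iota;
  case: n => [|[|n]] //; cbv beta iota; apply: ybit_fuel; lia.
Qed.

Lemma yfun_inverse_bits N : forall n, n < N -> forall e,
  yfun false (yfun true e) n = e n /\ yfun true (yfun false e) n = e n.
Proof.
elim: N => [|N IH] n // Hn e; split.
- rewrite [yfun true e]yinv_unfold.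
  case E0: (e 0); case E1: (e 1) => /=; rewrite yfun_unfold /= ?shift_scons ?shift0;
  case: n Hn => [|[|n]] Hn //=;
  (first [apply: (proj1 (IH _ _ _)) | apply: (proj2 (IH _ _ _))]; lia).
- rewrite [yfun false e]yfun_unfold.
  case E0: (e 0); case E1: (e 1) => /=; rewrite yinv_unfold /= ?shift_scons ?shift0;
  case: n Hn => [|[|n]] Hn //=;
  (first [apply: (proj1 (IH _ _ _)) | apply: (proj2 (IH _ _ _))]; lia).
Qed.

Lemma yinvK : cancel (yfun true) (yfun false).
Proof.
move=> e; apply: functional_extensionality => n.
by case: (yfun_inverse_bits (ltnSn n) e).
Qed.

Lemma yfunK : cancel (yfun false) (yfun true).
Proof.
move=> e; apply: functional_extensionality => n.
by case: (yfun_inverse_bits (ltnSn n) e).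
Qed.

Lemma y_yinv s : cancel (yinv_ s) (y_ s).
Proof. exact: restr_cancel yinvK. Qed.

Lemma yinv_y s : cancel (y_ s) (yinv_ s).
Proof. exact: restr_cancel yfunK. Qed.

Lemma S_ext f g : S f -> f =1 g -> S g.
Proof. by move=> Sf fg; rewrite -(functional_extensionality _ _ fg). Qed.

Lemma S_id : S id.
Proof. exact: gg_one. Qed.

Lemma S_of_T g : T g -> S g.
Proof. by move=> Tg; apply: gg_gen; left. Qed.

Definition xinv (e : stream) : stream :=
  if e 0 then (if e 1 then shift 1 e else scons false (scons true (shift 2 e)))
  else scons false e.

Lemma x_00 e : xfun (scons false (scons false e)) = scons false e.
Proof. by rewrite /xfun /= shift_scons shift0. Qed.
Lemma x_01 e : xfun (scons false (scons true e)) = scons true (scons false e).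
Proof. by rewrite /xfun /= !prepend_cons prepend_nil !shift_scons shift0. Qed.
Lemma x_1 e : xfun (scons true e) = scons true (scons true e).
Proof. by rewrite /xfun /= !prepend_cons prepend_nil. Qed.
Lemma xinv_0 e : xinv (scons false e) = scons false (scons false e).
Proof. by []. Qed.
Lemma xinv_10 e : xinv (scons true (scons false e)) = scons false (scons true e).
Proof. by rewrite /xinv /= !shift_scons shift0. Qed.
Lemma xinv_11 e : xinv (scons true (scons true e)) = scons true e.
Proof. by rewrite /xinv /= shift_scons shift0. Qed.

Lemma xinvK : cancel xinv xfun.
Proof.
move=> e; rewrite (scons_eta2 e); case: (e 0) (e 1) (shift 2 e) => [] [] f.
- by rewrite xinv_11 x_1.
- by rewrite xinv_10 x_01.
- by rewrite xinv_0 x_00.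
- by rewrite xinv_0 x_00.
Qed.

Lemma xfunK : cancel xfun xinv.
Proof.
move=> e; rewrite (scons_eta2 e); case: (e 0) (e 1) (shift 2 e) => [] [] f.
- by rewrite x_1 xinv_11.
- by rewrite x_1 xinv_11.
- by rewrite x_01 xinv_10.
- by rewrite x_00 xinv_0.
Qed.

(* x = x_{empty word} is a generator of T. *)
Lemma S_xfun : S xfun.
Proof.
apply: (@S_ext (x_ [::])); first by apply/S_of_T/gg_gen; left; exists [::].
by move=> e; rewrite /x_ /restr /= shift0 prepend_nil.
Qed.

Lemma S_xinv : S xinv.
Proof. exact: (gg_inv S_xfun xfunK xinvK). Qed.

(* p_2 permutes the cylinders 0, 10, 110, 111 cyclically; it has order 4. *)
Lemma p2_0 e : pfun 2 (scons false e) = scons true (scons false e).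
Proof. by rewrite /pfun /= prepend_cons prepend_nil. Qed.
Lemma p2_10 e : pfun 2 (scons true (scons false e)) = scons true (scons true (scons false e)).
Proof. by rewrite /pfun /= prepend_cons prepend_nil. Qed.
Lemma p2_110 e :
  pfun 2 (scons true (scons true (scons false e))) = scons true (scons true (scons true e)).
Proof. by rewrite /pfun /= !prepend_cons prepend_nil !shift_scons shift0. Qed.
Lemma p2_111 e : pfun 2 (scons true (scons true (scons true e))) = scons false e.
Proof. by rewrite /pfun /= !prepend_cons prepend_nil !shift_scons shift0. Qed.

Definition p2inv (e : stream) : stream := pfun 2 (pfun 2 (pfun 2 e)).

Lemma p2invK : cancel p2inv (pfun 2).
Proof.
move=> e; rewrite /p2inv (scons_eta3 e).
case: (e 0) (e 1) (e 2) (shift 3 e) => [] [] [] f.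
- by rewrite p2_111 p2_0 p2_10 p2_110.
- by rewrite p2_110 p2_111 p2_0 p2_10.
- by rewrite p2_10 p2_110 p2_111 p2_0.
- by rewrite p2_10 p2_110 p2_111 p2_0.
- by rewrite p2_0 p2_10 p2_110 p2_111.
- by rewrite p2_0 p2_10 p2_110 p2_111.
- by rewrite p2_0 p2_10 p2_110 p2_111.
- by rewrite p2_0 p2_10 p2_110 p2_111.
Qed.

Lemma p2K : cancel (pfun 2) p2inv.
Proof. by move=> e; rewrite /p2inv -[X in _ = X]p2invK. Qed.

Lemma S_p2 : S (pfun 2).
Proof. by apply/S_of_T/gg_gen; right; exists 2. Qed.

Lemma S_p2inv : S p2inv.
Proof. exact: (gg_inv S_p2 p2K p2invK). Qed.

Definition ycong (a b : seq bool) : Prop := S (rmul (y_ a) (yinv_ b)).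

Lemma ycong_refl a : ycong a a.
Proof. exact: (S_ext S_id (fun e => esym (yinv_y a e))). Qed.

Lemma ycong_sym a b : ycong a b -> ycong b a.
Proof.
move=> ab; apply: (gg_inv ab) => e; rewrite /rmul.
- by rewrite y_yinv yinv_y.
- by rewrite y_yinv yinv_y.
Qed.

Lemma ycong_trans a b c : ycong a b -> ycong b c -> ycong a c.
Proof. by move=> ab bc; apply: (S_ext (gg_mul ab bc)) => e; rewrite /rmul y_yinv. Qed.

Lemma ycong_conj a b a' b' g h : S g -> cancel g h -> cancel h g ->
  (forall x, g (prepend a x) = prepend a' x) ->
  (forall x, g (prepend b x) = prepend b' x) -> ycong a b -> ycong a' b'.
Proof.
move=> Sg gh hg ga gb ab.
apply: (S_ext (gg_mul (gg_mul (gg_inv Sg gh hg) ab) Sg)) => e; rewrite /rmul.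
rewrite -[y_ a (h e)]gh /yinv_ (restr_conj _ hg gh gb).
by rewrite /y_ (restr_conj _ hg gh ga).
Qed.

Lemma ycong_gen : ycong [:: true; false] [:: true; true; false].
Proof. by apply: gg_gen; right. Qed.

Definition ones_zero (j : nat) : seq bool := nseq j true ++ [:: false].

Lemma x_prepend u x : xfun (prepend (true :: u) x) = prepend (true :: true :: u) x.
Proof. by rewrite !prepend_cons x_1. Qed.

(* Conjugating ycong 10 110 by x lengthens both runs of ones. *)
Lemma ycong_ones_step j : ycong (ones_zero j.+1) (ones_zero j.+2).
Proof.
elim: j => [|j IH]; first exact: ycong_gen.
exact: (ycong_conj S_xfun xfunK xinvK (x_prepend _) (x_prepend _) IH).
Qed.

Lemma ycong_ones a b : ycong (ones_zero a.+1) (ones_zero b.+1).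
Proof.
have from10 j : ycong (ones_zero 1) (ones_zero j.+1).
  elim: j => [|j IH]; first exact: ycong_refl.
  exact: ycong_trans IH (ycong_ones_step j).
exact: ycong_trans (ycong_sym (from10 a)) (from10 b).
Qed.

Lemma ycong_zero w : ycong (false :: w) (ones_zero 1).
Proof.
elim: w => [|b w IH].
  apply: (ycong_conj S_p2inv p2invK p2K _ _ ycong_gen) => x.
  - by rewrite -(p2K (prepend [:: false] x)) !prepend_cons p2_0.
  - by rewrite -(p2K (prepend [:: true; false] x)) !prepend_cons p2_10.
(* x^-1 sends 10 w to 01 w, 0 w to 00 w, and 110 to 10. *)
case: b.
- have to110 : ycong [:: true, false & w] [:: true; true; false].
    apply: (ycong_conj S_p2 p2K p2invK _ _ IH) => x; rewrite !prepend_cons.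
    + exact: p2_0.
    + exact: p2_10.
  apply: (ycong_conj S_xinv xinvK xfunK _ _ to110) => x; rewrite !prepend_cons.
  + exact: xinv_10.
  + by rewrite xinv_11.
- apply: (ycong_conj S_xinv xinvK xfunK _ _ (ycong_trans IH ycong_gen)) => x.
  + by rewrite !prepend_cons xinv_0.
  + by rewrite !prepend_cons xinv_11.
Qed.

(* From 0 w to 10 w by conjugation with p_2, then by x for longer runs. *)
Lemma ycong_ones_prefix k w : ycong (nseq k true ++ false :: w) (ones_zero k.+1).
Proof.
elim: k => [|[|k] IH]; first exact: ycong_zero.
- apply: (ycong_conj S_p2 p2K p2invK _ _ IH) => x; rewrite /= !prepend_cons.
  + exact: p2_0.
  + exact: p2_10.
- exact: (ycong_conj S_xfun xfunK xinvK (x_prepend _) (x_prepend _) IH).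
Qed.

Lemma ycong_not_ones k w M : ycong (nseq k true ++ false :: w) (ones_zero M.+1).
Proof. exact: ycong_trans (ycong_ones_prefix k w) (ycong_ones k M). Qed.

Lemma not_ones_decomp s : (forall m, s <> nseq m true) ->
  exists k w, s = nseq k true ++ false :: w.
Proof.
elim: s => [|b s IH] H; first by case: (H 0).
case: b H => H; last by exists 0, s.
have [k [w ->]] : exists k w, s = nseq k true ++ false :: w.
  by apply: IH => m E; apply: (H m.+1); rewrite E.
by exists k.+1, w.
Qed.

(* 1^k 0 w and 1^M 0 differ at position k as soon as M is long enough. *)
Lemma incomparable_ones_zero k w M : size (nseq k true ++ false :: w) <= M ->
  incomparable (nseq k true ++ false :: w) (ones_zero M).
Proof.
rewrite size_cat size_nseq /= => H; exists k; split.
- rewrite size_cat size_nseq /=; lia.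
- rewrite /ones_zero size_cat size_nseq /=; lia.
- rewrite /ones_zero !nth_cat size_nseq ltnn subnn /= size_nseq nth_nseq.
  by have -> : k < M by lia.
Qed.

Local Open Scope ring_scope.
Import GRing.Theory.

Lemma int_ind_pm1 (Q : int -> Prop) : Q 0 -> (forall k, Q k -> Q (k + 1)) ->
  (forall k, Q k -> Q (k - 1)) -> forall z, Q z.
Proof.
move=> Q0 Qs Qp [k|k].
- elim: k => [|k IH] //.
  have -> : Posz k.+1 = Posz k + 1 by lia.
  exact: Qs.
- elim: k => [|k IH]; first exact: (Qp 0).
  have -> : Negz k.+1 = Negz k - 1 by rewrite !NegzE; lia.
  exact: Qp.
Qed.

Lemma ypow_succ s k e : ypow s (k + 1) e = y_ s (ypow s k e).
Proof.
case: k => [k|[|k]].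
- by have -> : Posz k + 1 = Posz k.+1 by lia.
- by rewrite /= y_yinv.
- have -> : Negz k.+1 + 1 = Negz k by rewrite !NegzE; lia.
  by rewrite /= y_yinv.
Qed.

Lemma ypow_pred s k e : ypow s (k - 1) e = yinv_ s (ypow s k e).
Proof.
case: k => [[|k]|k] //.
- have -> : Posz k.+1 - 1 = Posz k by lia.
  by rewrite /= yinv_y.
- by have -> : Negz k - 1 = Negz k.+1 by rewrite !NegzE; lia.
Qed.

Lemma ypowD r a b e : ypow r a (ypow r b e) = ypow r (a + b) e.
Proof.
elim/int_ind_pm1: a => [|k IH|k IH]; first by rewrite add0r.
- by rewrite ypow_succ IH -ypow_succ addrAC.
- by rewrite ypow_pred IH -ypow_pred addrAC.
Qed.

Lemma iter_comm A (f G : A -> A) k : (forall x, G (f x) = f (G x)) ->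
  forall x, iter k f (G x) = G (iter k f x).
Proof. by move=> Gf x; elim: k => [|k IH] //=; rewrite IH Gf. Qed.

Lemma ypow_comm r u G : (forall e, G (y_ r e) = y_ r (G e)) ->
  (forall e, G (yinv_ r e) = yinv_ r (G e)) -> forall e, ypow r u (G e) = G (ypow r u e).
Proof. by move=> Gy Gyinv; case: u => k; apply: iter_comm. Qed.

Lemma ypow_incomparable_comm s r t u e : incomparable s r ->
  ypow r u (ypow s t e) = ypow s t (ypow r u e).
Proof.
move=> sr; apply: ypow_comm => x; apply: ypow_comm => z;
  first [exact: restr_comm sr | exact: restr_comm (incomparable_sym sr)].
Qed.

(* For incomparable congruent s, r: y_s^t y_r^-t = (y_s y_r^-1)^t lies in S. *)
Lemma ycong_pow s r t : incomparable s r -> ycong s r ->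
  S (fun e => ypow r (- t) (ypow s t e)).
Proof.
move=> sr Hsr.
have comm b b' e : restr s (yfun b) (restr r (yfun b') e) =
                   restr r (yfun b') (restr s (yfun b) e) by exact: restr_comm.
have Hrs : S (rmul (yinv_ s) (y_ r)).
  by apply: (S_ext (ycong_sym Hsr)) => e; exact: comm.
elim/int_ind_pm1: t => [|k IH|k IH]; first exact: S_id.
- apply: (S_ext (gg_mul IH Hsr)) => e; rewrite /rmul.
  by rewrite opprD ypow_pred ypow_succ (ypow_comm _ (comm false false) (comm false true)).
- apply: (S_ext (gg_mul IH Hrs)) => e; rewrite /rmul.
  by rewrite opprB addrC ypow_pred ypow_succ (ypow_comm _ (comm true false) (comm true true)).
Qed.

Lemma telescope I (s : I -> seq bool) (t : I -> int) r (L : seq I) :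
  (forall i, incomparable (s i) r) -> (forall i, ycong (s i) r) ->
  S (rmul (rprod [seq ypow (s i) (t i) | i <- L]) (ypow r (- \sum_(i <- L) t i))).
Proof.
move=> sr Hsr; elim/last_ind: L => [|L i IH]; first by rewrite big_nil oppr0; exact: S_id.
apply: (S_ext (gg_mul IH (ycong_pow (t i) (sr i) (Hsr i)))) => e.
rewrite /rmul /rprod map_rcons foldl_rcons -cats1 big_cat big_seq1 /=.
by rewrite -(ypow_incomparable_comm _ _ _ (sr i)) ypowD opprD addrC.
Qed.

Theorem lemma6p8 (n : nat) (s : 'I_n -> seq bool) (t : 'I_n -> int)
  (hs : forall i : 'I_n, forall m : nat, s i <> nseq m true)
  (ht : \sum_(i < n) t i = 0) :
  S (rprod [seq ypow (s i) (t i) | i <- enum 'I_n]).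
Proof.
pose R := (\sum_(i < n) size (s i))%N.
have incomp i : incomparable (s i) (ones_zero R.+1).
  have [k [w E]] := not_ones_decomp (hs i); rewrite E; apply: incomparable_ones_zero.
  by rewrite -E; apply: leqW; rewrite /R (bigD1 i) //= leq_addr.
have cong i : ycong (s i) (ones_zero R.+1).
  by have [k [w ->]] := not_ones_decomp (hs i); exact: ycong_not_ones.
have := telescope t (enum 'I_n) incomp cong.
by rewrite big_enum /= ht oppr0.
Qed.
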